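(* Let $\lambda$ be a partition of $n$ with largest part $\lambda_1$. For every integer $m$ with $\ell(\lambda)\le m\le n-(\lambda_1-1)$, the set $\mathrm{QYT}_{=m}(\lambda)$ is nonempty.
   Context: A partition $\lambda=(\lambda_1\ge\lambda_2\ge\cdots\ge\lambda_k>0)$ of $n$ has length $\ell(\lambda)=k$ and size $n=\sum_i\lambda_i$. Its (French) Young diagram has $\lambda_j$ left-justified boxes in row $j$, rows numbered $1,\dots,k$ from bottom to top; a box is $(i,j)$ with $i$ its column and $j$ its row. A semistandard Young tableau (SSYT) of shape $\lambda$ is a filling of the boxes with positive integers that weakly increase from left to right along rows and strictly increase from bottom to top along columns. An SSYT $T$ is quasi-Yamanouchi if for every integer $i>1$ that appears in $T$, the leftmost occurrence of $i$ lies in a column weakly left of (i.e. with column index $\le$ that of) some occurrence of $i-1$ in $T$. $\mathrm{QYT}_{=m}(\lambda)$ denotes the set of quasi-Yamanouchi tableaux of shape $\lambda$ whose largest entry is exactly $m$. *)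

From mathcomp Require Import all_boot.
Set Implicit Arguments. Unset Strict Implicit. Unset Printing Implicit Defensive.

Definition is_partition (la : seq nat) : bool :=
  sorted geq la && all (fun p => 0 < p) la.

Definition psize (la : seq nat) : nat := sumn la.

(* A filling of a (French) Young diagram: list of rows, row j (0-indexed
   from the bottom) is the list of entries in columns 0,1,... *)
Definition tableau := seq (seq nat).

Definition shape (T : tableau) : seq nat := map size T.

Definition entry (T : tableau) (c r : nat) : nat := nth 0 (nth [::] T r) c.

Definition is_box (T : tableau) (c r : nat) : bool :=
  (r < size T) && (c < size (nth [::] T r)).

Definition is_SSYT (T : tableau) : Prop :=
  (forall c r, is_box T c r -> 0 < entry T c r) /\
  (forall c r, is_box T c.+1 r -> entry T c r <= entry T c.+1 r) /\
  (forall c r, is_box T c r.+1 -> entry T c r < entry T c r.+1).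

Definition occurs (T : tableau) (i : nat) : Prop :=
  exists c r, is_box T c r /\ entry T c r = i.

Definition quasi_yamanouchi (T : tableau) : Prop :=
  forall i, 1 < i -> occurs T i ->
    exists c r, [/\ is_box T c r, entry T c r = i,
      (forall c2 r2, is_box T c2 r2 -> entry T c2 r2 = i -> c <= c2) &
      exists c' r', [/\ is_box T c' r', entry T c' r' = i.-1 & c <= c']].

Definition max_entry_eq (T : tableau) (m : nat) : Prop :=
  occurs T m /\ (forall c r, is_box T c r -> entry T c r <= m).

Definition QYT_eq (m : nat) (la : seq nat) (T : tableau) : Prop :=
  [/\ shape T = la, is_SSYT T, quasi_yamanouchi T & max_entry_eq T m].

From mathcomp Require Import all_boot zify.

(* Fill column c of the diagram of la with the consecutive values
   g(c) + 1, ..., g(c) + h(c), where h(c) is the column height and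
   g(c) = min(N(c) - c, m - h(c)), N(c) being the number of boxes left of
   column c.  Inside the diagram g is nondecreasing,
   so rows weakly increase, and (as h(c) <= m) g grows by at most h(c) - 1
   from column c to column c + 1, so the bottom entry of column c + 1 already
   occurs in column c.  Hence the leftmost occurrence of any i > 1 is not in
   the bottom row, and i - 1 sits right below it.  The largest entry, on top
   of the last column, is min(n - lambda_1 + 1, m) = m. *)

Definition col_height (la : seq nat) (c : nat) : nat := count (fun l => c < l) la.

Definition boxes_before (la : seq nat) (c : nat) : nat :=
  sumn [seq minn c l | l <- la].

Definition col_offset (la : seq nat) (m c : nat) : nat :=
  minn (boxes_before la c - c) (m - col_height la c).

Definition qyt_tableau (la : seq nat) (m : nat) : tableau :=
  mkseq (fun r => [seq r.+1 + col_offset la m c | c <- iota 0 (nth 0 la r)])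
        (size la).

Lemma col_height_le_size la c : col_height la c <= size la.
Proof. exact: count_size. Qed.

Lemma col_heightS_le la c : col_height la c.+1 <= col_height la c.
Proof. by apply: sub_count => x /=; lia. Qed.

Lemma boxes_before0 la : boxes_before la 0 = 0.
Proof. by elim: la => //= a s; rewrite /boxes_before /= min0n. Qed.

Lemma boxes_beforeS la c :
  boxes_before la c.+1 = boxes_before la c + col_height la c.
Proof.
rewrite /boxes_before /col_height; elim: la => //= a s ->.
case: ltnP => /= ?; lia.
Qed.

Lemma boxes_before_ge la c : c <= head 0 la -> c <= boxes_before la c.
Proof. rewrite /boxes_before; case: la => [|a s] /=; lia. Qed.

Lemma leftmost_occurrence (T : tableau) i : occurs T i ->
  exists c r, [/\ is_box T c r, entry T c r = i &
    forall c2 r2, is_box T c2 r2 -> entry T c2 r2 = i -> c <= c2].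
Proof.
pose in_col c := has (fun r => is_box T c r && (entry T c r == i)) (iota 0 (size T)).
have in_colP c r : is_box T c r -> entry T c r = i -> in_col c.
  move=> /[dup] box /andP[rT _] entry_i; apply/hasP; exists r.
    by rewrite mem_iota.
  by rewrite box entry_i eqxx.
move=> [c0 [r0 [box0 entry0]]].
have ex_col : exists c, in_col c := ex_intro _ c0 (in_colP c0 r0 box0 entry0).
have [c /hasP[r _ /andP[box /eqP entry_i]] c_min] := ex_minnP ex_col.
by exists c, r; split=> // c2 r2 box2 entry2; apply/c_min/(in_colP c2 r2).
Qed.

Section SortedPartition.

Variable la : seq nat.
Hypothesis la_sorted : sorted geq la.

Lemma ltn_nth_col_height c r : (c < nth 0 la r) = (r < col_height la c).
Proof.
elim: la la_sorted r => [|a s IH] //=; first by move=> _ r; rewrite nth_nil.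
rewrite (path_sortedE (rev_trans leq_trans)) => /andP[/allP a_ge s_sorted] r.
rewrite /col_height /=; have [ca | ac] := ltnP c a.
  by case: r => [|r] //=; rewrite IH.
have -> : count (fun l => c < l) s = 0.
  rewrite (eq_in_count (a2 := pred0)) ?count_pred0 // => x /a_ge /=; lia.
case: r => [|r] /=; first by rewrite ltnNge ac.
apply/negbTE; rewrite -leqNgt; apply: leq_trans ac.
have [rs | rs] := ltnP r (size s); first exact/a_ge/mem_nth.
by rewrite nth_default.
Qed.

Lemma col_height_gt0 {c} : c < head 0 la -> 0 < col_height la c.
Proof. by rewrite -nth0 ltn_nth_col_height. Qed.

Lemma boxes_before_head : boxes_before la (head 0 la) = sumn la.
Proof.
move: la_sorted; rewrite /boxes_before; case: la => [|a s] //=.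
rewrite (path_sortedE (rev_trans leq_trans)) minnn => /andP[/allP a_ge _].
congr (_ + _); elim: s a_ge => //= b s IH a_ge.
rewrite IH => [|x xs]; last by apply: a_ge; rewrite inE xs orbT.
by have := a_ge b (mem_head _ _); lia.
Qed.

Variable m : nat.

Lemma col_offset0 : col_offset la m 0 = 0.
Proof. by rewrite /col_offset boxes_before0 min0n. Qed.

Lemma col_offset_leS {c} : c < head 0 la ->
  col_offset la m c <= col_offset la m c.+1.
Proof.
move=> c_lt; rewrite /col_offset boxes_beforeS.
have := col_height_gt0 c_lt; have := boxes_before_ge la c (ltnW c_lt).
have := col_heightS_le la c; lia.
Qed.

Lemma col_offsetS_le {c} : c.+1 < head 0 la -> size la <= m ->
  col_offset la m c.+1 <= col_offset la m c + (col_height la c).-1.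
Proof.
move=> c_lt la_m; rewrite /col_offset boxes_beforeS.
have := col_height_gt0 c_lt; have := boxes_before_ge la c (ltnW (ltnW c_lt)).
have := col_heightS_le la c; have := col_height_le_size la c; lia.
Qed.

Lemma is_box_qyt_tableau c r :
  is_box (qyt_tableau la m) c r = (r < col_height la c).
Proof.
rewrite /is_box /qyt_tableau size_mkseq.
have [r_lt | r_ge] := ltnP r (size la).
  by rewrite nth_mkseq // size_map size_iota ltn_nth_col_height.
by apply/esym/negbTE; rewrite -leqNgt (leq_trans (col_height_le_size la c)).
Qed.

Lemma entry_qyt_tableau c r : r < col_height la c ->
  entry (qyt_tableau la m) c r = r.+1 + col_offset la m c.
Proof.
move=> r_lt; have r_size := leq_trans r_lt (col_height_le_size la c).
have c_lt : c < nth 0 la r by rewrite ltn_nth_col_height.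
by rewrite /entry /qyt_tableau nth_mkseq // (nth_map 0) ?size_iota // nth_iota.
Qed.

Lemma shape_qyt_tableau : shape (qyt_tableau la m) = la.
Proof.
rewrite -[RHS](mkseq_nth 0) /shape /qyt_tableau /mkseq -map_comp.
by apply: eq_map => r /=; rewrite size_map size_iota.
Qed.

Lemma qyt_tableau_SSYT : is_SSYT (qyt_tableau la m).
Proof.
split; [|split] => c r; rewrite is_box_qyt_tableau => r_lt.
- by rewrite entry_qyt_tableau.
- have r_lt' := leq_trans r_lt (col_heightS_le la c).
  have c_lt : c.+1 < head 0 la.
    by rewrite -nth0 ltn_nth_col_height (leq_ltn_trans (leq0n r)).
  by rewrite !entry_qyt_tableau // leq_add2l col_offset_leS // ltnW.
- by rewrite !entry_qyt_tableau // ltnW.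
Qed.

Lemma bottom_entry_occurs_left {c} : c.+1 < head 0 la -> size la <= m ->
  exists2 r, r < col_height la c &
    entry (qyt_tableau la m) c r = entry (qyt_tableau la m) c.+1 0.
Proof.
move=> c_lt la_m; have h_pos := col_height_gt0 (ltnW c_lt).
have := col_offsetS_le c_lt la_m; have := col_offset_leS (ltnW c_lt).
exists (col_offset la m c.+1 - col_offset la m c); first lia.
by rewrite !entry_qyt_tableau ?col_height_gt0 //; lia.
Qed.

Lemma qyt_tableau_quasi_yamanouchi :
  size la <= m -> quasi_yamanouchi (qyt_tableau la m).
Proof.
move=> la_m i i_gt1 /leftmost_occurrence[c [r [box entry_i leftmost]]].
exists c, r; split=> //; move: box; rewrite is_box_qyt_tableau => r_lt.
case: r => [|r] in r_lt entry_i *.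
  case: c => [|c] in r_lt entry_i leftmost *.
    by move: entry_i i_gt1; rewrite entry_qyt_tableau // col_offset0 => <-.
  have c_lt : c.+1 < head 0 la by rewrite -nth0 ltn_nth_col_height.
  have [r' r'_lt entry_r'] := bottom_entry_occurs_left c_lt la_m.
  have := leftmost c r'; rewrite is_box_qyt_tableau entry_r' ltnn.
  by move=> /(_ r'_lt entry_i).
exists c, r; split=> //; first by rewrite is_box_qyt_tableau ltnW.
by move: entry_i; rewrite !entry_qyt_tableau ?(ltnW r_lt) // => <-.
Qed.

Lemma qyt_tableau_max_entry : 0 < head 0 la -> size la <= m ->
  m <= sumn la - (head 0 la - 1) -> max_entry_eq (qyt_tableau la m) m.
Proof.
move=> head_gt0 la_m m_le; split => [|c r]; last first.
  rewrite is_box_qyt_tableau => r_lt; rewrite entry_qyt_tableau // /col_offset.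
  by have := col_height_le_size la c; lia.
have c_lt : (head 0 la).-1 < head 0 la by lia.
have h_pos := col_height_gt0 c_lt.
exists (head 0 la).-1, (col_height la (head 0 la).-1).-1.
rewrite is_box_qyt_tableau entry_qyt_tableau; last by lia.
split; first by lia.
have := boxes_beforeS la (head 0 la).-1.
rewrite prednK // boxes_before_head /col_offset.
by have := col_height_le_size la (head 0 la).-1; lia.
Qed.

End SortedPartition.

Theorem mainTheorem2 (la : seq nat) (n m : nat) :
  is_partition la -> la != [::] -> psize la = n ->
  size la <= m -> m <= n - (head 0 la - 1) ->
  exists T : tableau, QYT_eq m la T.
Proof.
move=> /andP[la_sorted la_pos] la_nil <- la_m m_le.
have head_gt0 : 0 < head 0 la.
  by rewrite -nth0; apply: (all_nthP 0 la_pos); rewrite lt0n size_eq0.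
exists (qyt_tableau la m); split.
- exact: shape_qyt_tableau.
- exact: qyt_tableau_SSYT.
- exact: qyt_tableau_quasi_yamanouchi.
- exact: qyt_tableau_max_entry.
Qed.
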